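(* Let $G=(V,E,\gamma,c)$ be a typed DAG task with $M_s\ge1$ cores of each type $s\in S$. Let $u\in V$, let $\pi_1$ and $\pi_2$ be two paths of $G$ both ending at $u$, and let $v$ be a successor of $u$; let $\pi_1'$, $\pi_2'$ be the paths obtained by appending $v$ to $\pi_1$, $\pi_2$ respectively. If $\langle u,\Delta_{\pi_1}(u),\mathcal{R}_{\pi_1}(u)\rangle\succcurlyeq\langle u,\Delta_{\pi_2}(u),\mathcal{R}_{\pi_2}(u)\rangle$, then $\langle v,\Delta_{\pi_1'}(v),\mathcal{R}_{\pi_1'}(v)\rangle\succcurlyeq\langle v,\Delta_{\pi_2'}(v),\mathcal{R}_{\pi_2'}(v)\rangle$.
   Context: A typed DAG task is $G=(V,E,\gamma,c)$ where $(V,E)$ is a finite directed acyclic graph with a unique source and a unique sink, $S$ is a finite set of core types, $\gamma:V\to S$ gives the type of each vertex, and $c:V\to\mathbb{R}_{\ge0}$ gives the WCET of each vertex. $\mathrm{ans}(u)$, $\mathrm{des}(u)$ denote ancestors and descendants of $u$. For $w\in V$, $\mathrm{par}(w)=\{x\in V: x\ne w,\ \gamma(x)=\gamma(w),\ x\notin \mathrm{ans}(w)\cup\mathrm{des}(w)\}$, and $\mathrm{par}(\bot)=\emptyset$. For a path $\pi=(\tau_1,\dots,\tau_k)$ and $s\in S$: $\delta_\pi(\tau_i,s)=\tau_i$ if $\gamma(\tau_i)=s$; $\delta_\pi(\tau_1,s)=\bot$ if $\gamma(\tau_1)\ne s$; $\delta_\pi(\tau_i,s)=\delta_\pi(\tau_{i-1},s)$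 if $\gamma(\tau_i)\ne s$, $i\ge2$. $\Delta_\pi(\tau_i)=(\delta_\pi(\tau_i,s))_{s\in S}$. For $i\ge2$, $\varphi_\pi(\tau_i)=\mathrm{par}(\tau_i)\setminus\mathrm{par}(\delta_\pi(\tau_{i-1},\gamma(\tau_i)))$; $\mathcal{R}_\pi(\tau_1)=c(\tau_1)$ and $\mathcal{R}_\pi(\tau_i)=\mathcal{R}_\pi(\tau_{i-1})+c(\tau_i)+\sum_{x\in\varphi_\pi(\tau_i)}c(x)/M_{\gamma(\tau_i)}$ for $i\ge2$. For a path $\pi$ ending at $u$, its tuple is $\langle u,\Delta_\pi(u),\mathcal{R}_\pi(u)\rangle$. Domination: $\langle w,\Delta_1,\mathcal{R}_1\rangle\succcurlyeq\langle w,\Delta_2,\mathcal{R}_2\rangle$ (same vertex $w$, with $\Delta_j=(\delta_j(w,s))_{s\in S}$) iff (1) $\mathcal{R}_1\ge\mathcal{R}_2$, and (2) for every $s\in S$, either $\delta_1(w,s)=\bot$, or $\delta_1(w,s)\ne\bot$, $\delta_2(w,s)\ne\bot$ and $\mathrm{par}(\delta_1(w,s))\cap\mathrm{des}(\delta_2(w,s))=\emptyset$. *)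

From HB Require Import structures.
From mathcomp Require Import all_boot all_order all_algebra.
Set Implicit Arguments. Unset Strict Implicit. Unset Printing Implicit Defensive.
Import Order.TTheory GRing.Theory Num.Theory.
Local Open Scope ring_scope.

(* Typed DAG tasks G = (V, E, gamma, c): V a finType, E : rel V the edge
   relation, gamma : V -> S the core type, c : V -> R the WCET.
   Vertex bottom (⊥) is encoded by [None : option V]. *)

Definition des (V : finType) (E : rel V) (x y : V) : bool :=
  [exists z, E x z && connect E z y].

(* x \in ans(w) iff des E x w *)

Definition typed_dag_task (R : realFieldType) (V S : finType) (E : rel V)
  (gamma : V -> S) (c : V -> R) : Prop :=
  [/\ (forall x, ~~ des E x x),
      (exists! x, [forall y, ~~ E y x]),
      (exists! x, [forall y, ~~ E x y])
    & (forall x, 0 <= c x)].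

Definition par (V S : finType) (E : rel V) (gamma : V -> S) (w : V) : {set V} :=
  [set x | [&& x != w, gamma x == gamma w, ~~ des E x w & ~~ des E w x]].

Definition par_opt (V S : finType) (E : rel V) (gamma : V -> S)
  (o : option V) : {set V} :=
  if o is Some w then par E gamma w else set0.

Definition is_path (V : finType) (E : rel V) (pi : seq V) : bool :=
  if pi is x :: p then path E x p else false.

Definition ends_at (V : finType) (pi : seq V) (u : V) : bool :=
  if pi is x :: p then last x p == u else false.

(* delta_pi(tau_k, s) for the path pi = (tau_1, ..., tau_k): the last vertex of
   type s among tau_1..tau_k, or ⊥ (None) if there is none. *)
Definition delta (V S : finType) (gamma : V -> S) (pi : seq V) (s : S)
  : option V :=
  foldl (fun acc x => if gamma x == s then Some x else acc) None pi.

Definition Delta (V S : finType) (gamma : V -> S) (pi : seq V) : S -> option V :=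
  fun s => delta gamma pi s.

(* phi_pi(tau_i) = par(tau_i) \ par(delta_pi(tau_{i-1}, gamma tau_i)),
   where prefix = (tau_1, ..., tau_{i-1}). *)
Definition phi (V S : finType) (E : rel V) (gamma : V -> S)
  (prefix : seq V) (x : V) : {set V} :=
  par E gamma x :\: par_opt E gamma (delta gamma prefix (gamma x)).

(* R on the reversed path (last vertex first). *)
Fixpoint Rrev (R : realFieldType) (V S : finType) (E : rel V)
  (gamma : V -> S) (c : V -> R) (M : S -> nat) (r : seq V) : R :=
  match r with
  | [::] => 0
  | x :: r' =>
      if r' is [::] then c x
      else Rrev E gamma c M r' + c x
           + \sum_(y in phi E gamma (rev r') x) c y / (M (gamma x))%:R
  end.

Definition Rpath (R : realFieldType) (V S : finType) (E : rel V)
  (gamma : V -> S) (c : V -> R) (M : S -> nat) (pi : seq V) : R :=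
  Rrev E gamma c M (rev pi).

Definition path_tuple (R : realFieldType) (V S : finType) (E : rel V)
  (gamma : V -> S) (c : V -> R) (M : S -> nat) (u : V) (pi : seq V)
  : V * (S -> option V) * R :=
  (u, Delta gamma pi, Rpath E gamma c M pi).

Definition dominates (R : realFieldType) (V S : finType) (E : rel V)
  (gamma : V -> S) (t1 t2 : V * (S -> option V) * R) : Prop :=
  let: (w1, D1, R1) := t1 in
  let: (w2, D2, R2) := t2 in
  [/\ w1 = w2, R2 <= R1 &
      forall s : S,
        match D1 s with
        | None => True
        | Some d1 =>
            match D2 s with
            | None => False
            | Some d2 => is_true [disjoint par E gamma d1 & [set y | des E d2 y]]
            end
        end].

From HB Require Import structures.
From mathcomp Require Import all_boot all_order all_algebra.
Import Order.TTheory GRing.Theory Num.Theory.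
Local Open Scope ring_scope.

(* Appending v makes v the new last vertex of type gamma v on both paths, and
   par(v) contains no descendant of v, so condition (2) holds for that type;
   for the other types nothing changes. For the response times, the two
   increments differ only through phi(v), and phi_{pi2'}(v) is contained in
   phi_{pi1'}(v): the last vertex b of type gamma v on pi2 is an ancestor of v,
   so a vertex x of par(v) outside des(b) lies in par(b). The only property of
   the task used is c >= 0. *)

Lemma ler_sum_subset (R : numDomainType) (T : finType) (A B : {set T})
    (f : T -> R) :
  A \subset B -> (forall x, 0 <= f x) -> \sum_(x in A) f x <= \sum_(x in B) f x.
Proof.
move=> sAB f_ge0; rewrite [X in _ <= X](big_setID A) /= (setIidPr sAB) lerDl.
exact: sumr_ge0.
Qed.

Section Descendants.

Variables (V : finType) (E : rel V).

Lemma des_trans x y z : des E x y -> des E y z -> des E x z.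
Proof.
case/existsP=> x' /andP[Exx' cx'y] /existsP[y' /andP[Eyy' cy'z]].
apply/existsP; exists x'; rewrite Exx' /=.
exact: connect_trans cx'y (connect_trans (connect1 Eyy') cy'z).
Qed.

Lemma connect_des x y z : connect E x y -> E y z -> des E x z.
Proof.
case/connectP=> [[|x' p]] /= => [_ -> Eyz|/andP[Exx' px'] -> Eyz].
  by apply/existsP; exists z; rewrite Eyz connect0.
apply/existsP; exists x'; rewrite Exx' /=.
by apply: connect_trans (connect1 Eyz); apply/connectP; exists p.
Qed.

Lemma connect_path_end pi u x :
  is_path E pi -> ends_at pi u -> x \in pi -> connect E x u.
Proof.
case: pi => // y p /= yp /eqP <-; move: yp => /[swap] /splitPl[p1 p2 <-].
by rewrite cat_path last_cat => /andP[_ /path_connect]; apply; apply: mem_last.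
Qed.

End Descendants.

Arguments des_trans {V E x y z}.
Arguments connect_des {V E x y z}.

Section Parallel.

Variables (V S : finType) (E : rel V) (gamma : V -> S).

Lemma par_disjoint_des w : [disjoint par E gamma w & [set y | des E w y]].
Proof.
by rewrite disjoint_subset; apply/subsetP => x; rewrite !inE => /and4P[_ _ _ ->].
Qed.

Lemma par_ancestor b v x :
  des E b v -> gamma b = gamma v -> x \in par E gamma v -> ~~ des E b x ->
  x \in par E gamma b.
Proof.
move=> dbv gbv; rewrite !inE gbv => /and4P[_ -> nxv _] ->; rewrite andbT.
apply/andP; split.
  by apply: contraNneq nxv => ->.
by apply: contra nxv => dxb; apply: des_trans dxb dbv.
Qed.

Lemma delta_rcons pi v s :
  delta gamma (rcons pi v) s = if gamma v == s then Some v else delta gamma pi s.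
Proof. by rewrite /delta foldl_rcons. Qed.

Lemma delta_Some {p : seq V} {s : S} {b : V} :
  delta gamma p s = Some b -> b \in p /\ gamma b = s.
Proof.
elim/last_ind: p => // p v IHp; rewrite delta_rcons mem_rcons in_cons.
case: eqP => [<- [<-]|_ /IHp[-> ->]]; last by rewrite orbT.
by rewrite eqxx.
Qed.

(* Condition (2) of domination for one core type; [dominates] unfolds to it. *)
Definition delta_dominates (d1 d2 : option V) : Prop :=
  match d1 with
  | None => True
  | Some a =>
      match d2 with
      | None => False
      | Some b => is_true [disjoint par E gamma a & [set y | des E b y]]
      end
  end.

Lemma delta_dominates_rcons pi1 pi2 v s :
  delta_dominates (delta gamma pi1 s) (delta gamma pi2 s) ->
  delta_dominates (delta gamma (rcons pi1 v) s) (delta gamma (rcons pi2 v) s).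
Proof. by rewrite !delta_rcons; case: eqP => // _ _; apply: par_disjoint_des. Qed.

Lemma phi_rcons_subset pi1 pi2 u v :
  is_path E pi2 -> ends_at pi2 u -> E u v ->
  delta_dominates (delta gamma pi1 (gamma v)) (delta gamma pi2 (gamma v)) ->
  phi E gamma pi2 v \subset phi E gamma pi1 v.
Proof.
move=> p2 e2 Euv; rewrite /phi.
case D1: (delta gamma pi1 (gamma v)) => [a|] /=; last by rewrite setD0 subsetDl.
case D2: (delta gamma pi2 (gamma v)) => [b|] //= par_a_des_b.
have [b_pi2 gbv] := delta_Some D2.
have dbv : des E b v by apply: connect_des Euv; apply: connect_path_end p2 e2 b_pi2.
apply/subsetP => x; rewrite !in_setD => /andP[x_nparb x_parv]; rewrite x_parv andbT.
apply: contra x_nparb => x_para; apply: par_ancestor dbv gbv x_parv _.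
by have := disjointFr par_a_des_b x_para; rewrite inE => ->.
Qed.

Variables (R : realFieldType) (c : V -> R) (M : S -> nat).

Lemma Rpath_rcons pi v : pi != [::] ->
  Rpath E gamma c M (rcons pi v) =
    Rpath E gamma c M pi + c v + \sum_(y in phi E gamma pi v) c y / (M (gamma v))%:R.
Proof.
rewrite /Rpath rev_rcons /=; case Erev: (rev pi) => [|x r].
  by move/(congr1 size): Erev; rewrite size_rev; case: pi.
by rewrite -Erev revK.
Qed.

Lemma Rpath_rcons_le pi1 pi2 v :
  (forall x, 0 <= c x) -> pi1 != [::] -> pi2 != [::] ->
  Rpath E gamma c M pi2 <= Rpath E gamma c M pi1 ->
  phi E gamma pi2 v \subset phi E gamma pi1 v ->
  Rpath E gamma c M (rcons pi2 v) <= Rpath E gamma c M (rcons pi1 v).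
Proof.
move=> c_ge0 ne1 ne2 R21 sphi; rewrite !Rpath_rcons //.
apply: lerD; first by rewrite lerD2r.
by apply: ler_sum_subset sphi _ => y; rewrite divr_ge0 ?ler0n.
Qed.

End Parallel.

Theorem lemma4 (R : realFieldType) (V S : finType) (E : rel V)
  (gamma : V -> S) (c : V -> R) (M : S -> nat) :
  typed_dag_task E gamma c ->
  (forall s : S, (1 <= M s)%N) ->
  forall (u v : V) (pi1 pi2 : seq V),
    is_path E pi1 -> is_path E pi2 ->
    ends_at pi1 u -> ends_at pi2 u ->
    E u v ->
    dominates E gamma (path_tuple E gamma c M u pi1)
                      (path_tuple E gamma c M u pi2) ->
    dominates E gamma (path_tuple E gamma c M v (rcons pi1 v))
                      (path_tuple E gamma c M v (rcons pi2 v)).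
Proof.
case=> _ _ _ c_ge0 _ u v pi1 pi2 _ p2 e1 e2 Euv [_ R21 dom].
have ne1 : pi1 != [::] by case: (pi1) e1.
have ne2 : pi2 != [::] by case: (pi2) e2.
split=> [//||s].
- apply: Rpath_rcons_le => //.
  exact: phi_rcons_subset p2 e2 Euv (dom (gamma v)).
- exact: delta_dominates_rcons (dom s).
Qed.
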